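(* There exists a recursive subset $\mathcal{A}\subseteq\mathbb{Z}$ which is closed in the profinite topology of $\mathbb{Z}$ and such that the function $n\mapsto\mathcal{A}\bmod n$ (for $n\ge1$) is not recursive.
   Context: $\mathcal{A}\bmod n=\{r\in\{0,\dots,n-1\}:\exists x\in\mathcal{A},\ x\equiv r\bmod n\}$. The profinite topology on $\mathbb{Z}$ has as basis of open sets the arithmetic progressions $m+p\mathbb{Z}$ ($m\in\mathbb{Z}$, $p\ge1$). *)

From Stdlib Require Import ZArith List Arith.
Import ListNotations.
Open Scope Z_scope.

Inductive code : Type :=
  | CZero : code
  | CSucc : code
  | CProj : nat -> code
  | CComp : code -> list code -> code
  | CRec  : code -> code -> code        (* primitive recursion on first argument *)
  | CMu   : code -> code.               (* least y with f (y :: xs) = 0 *)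

Inductive eval : code -> list nat -> nat -> Prop :=
  | ev_zero : forall xs, eval CZero xs 0
  | ev_succ : forall x xs, eval CSucc (x :: xs) (S x)
  | ev_proj : forall i xs, eval (CProj i) xs (nth i xs 0%nat)
  | ev_comp : forall f gs xs ys y,
      evalL gs xs ys -> eval f ys y -> eval (CComp f gs) xs y
  | ev_rec0 : forall f g xs y, eval f xs y -> eval (CRec f g) (0%nat :: xs) y
  | ev_recS : forall f g n xs r y,
      eval (CRec f g) (n :: xs) r -> eval g (n :: r :: xs) y ->
      eval (CRec f g) (S n :: xs) y
  | ev_mu : forall f xs y,
      eval f (y :: xs) 0%nat ->
      (forall z, (z < y)%nat -> exists v, eval f (z :: xs) (S v)) ->
      eval (CMu f) xs y
with evalL : list code -> list nat -> list nat -> Prop :=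
  | evL_nil : forall xs, evalL [] xs []
  | evL_cons : forall g gs xs y ys,
      eval g xs y -> evalL gs xs ys -> evalL (g :: gs) xs (y :: ys).

Definition Z_to_nat (z : Z) : nat :=
  if 0 <=? z then Z.to_nat (2 * z) else Z.to_nat (- 2 * z - 1).

Definition recursive_Zset (A : Z -> Prop) : Prop :=
  exists c : code, forall z : Z,
    (A z -> eval c [Z_to_nat z] 1%nat) /\ (~ A z -> eval c [Z_to_nat z] 0%nat).

Definition arith_prog (m p : Z) (x : Z) : Prop := exists k : Z, x = m + p * k.

Definition profinite_open (U : Z -> Prop) : Prop :=
  forall x, U x -> exists m p, 1 <= p /\ arith_prog m p x /\
                       (forall y, arith_prog m p y -> U y).

Definition profinite_closed (A : Z -> Prop) : Prop :=
  profinite_open (fun x => ~ A x).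

Definition mod_set (A : Z -> Prop) (n : nat) (r : nat) : Prop :=
  (r < n)%nat /\ exists x, A x /\ x mod (Z.of_nat n) = Z.of_nat r.

(** The map n |-> A mod n (n >= 1), whose values are finite subsets of
    {0,...,n-1}, is recursive iff membership r \in A mod n is decidable by a
    code taking (n, r). *)
Definition recursive_mod_map (A : Z -> Prop) : Prop :=
  exists c : code, forall n r : nat, (1 <= n)%nat ->
    (mod_set A n r -> eval c [n; r] 1%nat) /\
    (~ mod_set A n r -> eval c [n; r] 0%nat).

(* Number the codes by [enc_code] and let [A] consist of [0] and the numbers
   [2^e (2w + 1)] for which [w] is the least certificate that the code numbered [e]
   outputs [0] on [(2^(e+1), 2^e)]. A certificate is a list of computation facts, each
   following by one rule of [eval] from facts in the list; checking one is primitive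
   recursive, and every element [h] of [A] bounds its own [e] and [w], so [A] is
   recursive. Then [2^e] lies in [A mod 2^(e+1)] iff the code numbered [e] outputs [0]
   on [(2^(e+1), 2^e)], so a code computing [n |-> A mod n] contradicts itself on its
   own number. Finally, each [e] contributes at most one element of 2-adic valuation
   [e]; hence for every [T] all but finitely many elements of [A] are divisible by
   [2^T], and a nonzero [y] outside [A] is isolated from [A] by the progression
   [y + 2^T M Z] once [2^T > |y|] and [M] is large. *)

From Stdlib Require Import ZArith List Arith Lia Cantor Classical.
Import ListNotations.
Open Scope nat_scope.

(** * Primitive recursive expressions *)

Inductive pexp : Type :=
| Var : nat -> pexp
| Zero : pexp
| Succ : pexp -> pexp
| Add : pexp -> pexp -> pexp
| Fold : pexp -> pexp -> pexp -> pexp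
| Sum : pexp -> pexp -> pexp
| Comp : pexp -> list pexp -> pexp.

Section PexpInd.
Variable P : pexp -> Prop.
Hypothesis HVar : forall i, P (Var i).
Hypothesis HZero : P Zero.
Hypothesis HSucc : forall a, P a -> P (Succ a).
Hypothesis HAdd : forall a b, P a -> P b -> P (Add a b).
Hypothesis HFold : forall b a s, P b -> P a -> P s -> P (Fold b a s).
Hypothesis HSum : forall b s, P b -> P s -> P (Sum b s).
Hypothesis HComp : forall f args, P f -> Forall P args -> P (Comp f args).

Fixpoint pexp_ind' (e : pexp) : P e :=
  match e with
  | Var i => HVar i
  | Zero => HZero
  | Succ a => HSucc a (pexp_ind' a)
  | Add a b => HAdd a b (pexp_ind' a) (pexp_ind' b)
  | Fold b a s => HFold b a s (pexp_ind' b) (pexp_ind' a) (pexp_ind' s)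
  | Sum b s => HSum b s (pexp_ind' b) (pexp_ind' s)
  | Comp f args => HComp f args (pexp_ind' f)
      ((fix all (l : list pexp) : Forall P l :=
          match l with
          | [] => Forall_nil _
          | x :: l' => Forall_cons _ (pexp_ind' x) (all l')
          end) args)
  end.
End PexpInd.

Fixpoint iter_up (n a : nat) (f : nat -> nat -> nat) : nat :=
  match n with 0 => a | S k => f k (iter_up k a f) end.

Fixpoint sum_below (n : nat) (f : nat -> nat) : nat :=
  match n with 0 => 0 | S k => f k + sum_below k f end.

Fixpoint den (e : pexp) (env : list nat) : nat :=
  match e with
  | Var i => nth i env 0
  | Zero => 0
  | Succ a => S (den a env)
  | Add a b => den a env + den b env
  | Fold b a s => iter_up (den b env) (den a env) (fun k acc => den s (k :: acc :: env))
  | Sum b s => sum_below (den b env) (fun k => den s (k :: env))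
  | Comp f args => den f (map (fun a => den a env) args)
  end.

Definition projs (m n : nat) : list code := map CProj (seq m n).

Definition add_code : code := CRec (CProj 0) (CComp CSucc [CProj 1]).

(* [compile n e] is meant for environments of length [n]. *)
Fixpoint compile (n : nat) (e : pexp) : code :=
  match e with
  | Var i => CProj i
  | Zero => CZero
  | Succ a => CComp CSucc [compile n a]
  | Add a b => CComp add_code [compile n a; compile n b]
  | Fold b a s =>
      CComp (CRec (compile n a) (compile (S (S n)) s)) (compile n b :: projs 0 n)
  | Sum b s =>
      CComp (CRec CZero (CComp add_code
                           [CComp (compile (S n) s) (CProj 0 :: projs 2 n); CProj 1]))
            (compile n b :: projs 0 n)
  | Comp f args => CComp (compile (length args) f) (map (compile n) args)
  end.

Lemma eval_add_code x y : eval add_code [x; y] (x + y).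
Proof.
  induction x as [|x IHx].
  - apply (ev_rec0 _ _ [y]), (ev_proj 0 [y]).
  - eapply ev_recS; [exact IHx|].
    eapply ev_comp; [|apply ev_succ].
    repeat constructor.
Qed.

Lemma evalL_projs m n env :
  evalL (projs m n) env (map (fun i => nth i env 0) (seq m n)).
Proof.
  revert m; induction n as [|n IHn]; intros m; constructor.
  - constructor.
  - apply IHn.
Qed.

Lemma map_nth_seq_length (env : list nat) :
  map (fun i => nth i env 0) (seq 0 (length env)) = env.
Proof.
  induction env as [|x env IH]; [reflexivity|].
  cbn [length seq map nth]. f_equal.
  rewrite <- seq_shift, map_map. exact IH.
Qed.

Lemma evalL_projs_all env : evalL (projs 0 (length env)) env env.
Proof.
  rewrite <- (map_nth_seq_length env) at 3. apply evalL_projs.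
Qed.

Lemma evalL_projs_drop2 a b env : evalL (projs 2 (length env)) (a :: b :: env) env.
Proof.
  replace env with (map (fun i => nth i (a :: b :: env) 0) (seq 2 (length env))) at 3.
  - apply evalL_projs.
  - rewrite <- !seq_shift, !map_map. apply map_nth_seq_length.
Qed.

Theorem compile_correct e env : eval (compile (length env) e) env (den e env).
Proof.
  revert env.
  induction e as [i| |a IHa|a b IHa IHb|b a s IHb IHa IHs|b s IHb IHs|f args IHf IHargs]
    using pexp_ind'; intros env; cbn [compile den].
  - constructor.
  - constructor.
  - repeat econstructor. apply IHa.
  - econstructor; [repeat econstructor; auto|apply eval_add_code].
  - econstructor; [constructor; [apply IHb|apply evalL_projs_all]|].
    induction (den b env) as [|m IHm]; cbn [iter_up].
    + constructor. apply IHa.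
    + eapply ev_recS; [exact IHm|]. exact (IHs (_ :: _ :: env)).
  - econstructor; [constructor; [apply IHb|apply evalL_projs_all]|].
    induction (den b env) as [|m IHm]; cbn [sum_below].
    + repeat constructor.
    + eapply ev_recS; [exact IHm|].
      econstructor; [|apply eval_add_code].
      econstructor; [|econstructor; [apply (ev_proj 1)|constructor]].
      econstructor; [constructor; [constructor|apply evalL_projs_drop2]|].
      exact (IHs (_ :: env)).
  - apply ev_comp with (ys := map (fun a => den a env) args).
    + clear IHf. induction IHargs; constructor; auto.
    + rewrite <- (length_map (fun a => den a env)). apply IHf.
Qed.

Definition holds (e : pexp) (env : list nat) : Prop := den e env <> 0.

Lemma holds_var i env : holds (Var i) env <-> nth i env 0 <> 0.
Proof. reflexivity. Qed.

Lemma holds_comp f args env :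
  holds (Comp f args) env <-> holds f (map (fun a => den a env) args).
Proof. reflexivity. Qed.

Fixpoint pnum (n : nat) : pexp := match n with 0 => Zero | S k => Succ (pnum k) end.

Lemma den_pnum n env : den (pnum n) env = n.
Proof. induction n; cbn; auto. Qed.

Definition pnot (a : pexp) : pexp := Comp (Fold (Var 0) (Succ Zero) Zero) [a].

Lemma den_pnot a env : den (pnot a) env = if den a env =? 0 then 1 else 0.
Proof. cbn. destruct (den a env); reflexivity. Qed.

Lemma holds_pnot a env : holds (pnot a) env <-> ~ holds a env.
Proof. unfold holds. rewrite den_pnot. destruct (den a env); cbn; lia. Qed.

Definition pbool (a : pexp) : pexp := pnot (pnot a).

Lemma den_pbool a env : den (pbool a) env = if den a env =? 0 then 0 else 1.
Proof. unfold pbool. rewrite !den_pnot. destruct (den a env); reflexivity. Qed.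

Definition pmul (a b : pexp) : pexp := Comp (Sum (Var 0) (Var 2)) [a; b].

Lemma sum_below_const n c : sum_below n (fun _ => c) = n * c.
Proof. induction n; cbn; lia. Qed.

Lemma den_pmul a b env : den (pmul a b) env = den a env * den b env.
Proof. cbn [pmul den map nth]. apply sum_below_const. Qed.

Definition pand (a b : pexp) : pexp := pmul a b.

Lemma holds_pand a b env : holds (pand a b) env <-> holds a env /\ holds b env.
Proof. unfold holds, pand. rewrite den_pmul, Nat.mul_eq_0. tauto. Qed.

Definition por (a b : pexp) : pexp := Add a b.

Lemma holds_por a b env : holds (por a b) env <-> holds a env \/ holds b env.
Proof. unfold holds, por. cbn. lia. Qed.

Definition ppred (a : pexp) : pexp := Comp (Fold (Var 0) Zero (Var 0)) [a].

Lemma den_ppred a env : den (ppred a) env = pred (den a env).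
Proof. cbn. destruct (den a env); reflexivity. Qed.

Definition psub (a b : pexp) : pexp := Comp (Fold (Var 1) (Var 0) (ppred (Var 1))) [a; b].

Lemma den_psub a b env : den (psub a b) env = den a env - den b env.
Proof.
  cbn [psub den map nth]. generalize (den a env) (den b env). intros x y.
  enough (forall n, iter_up n x (fun k acc => den (ppred (Var 1)) [k; acc; x; y]) = x - n)
    by auto.
  induction n as [|n IH]; cbn [iter_up]; [lia|].
  rewrite den_ppred. cbn [den nth]. rewrite IH. lia.
Qed.

Definition peq (a b : pexp) : pexp := pand (pnot (psub a b)) (pnot (psub b a)).

Lemma holds_peq a b env : holds (peq a b) env <-> den a env = den b env.
Proof.
  unfold peq. rewrite holds_pand, !holds_pnot. unfold holds. rewrite !den_psub. lia.
Qed.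

Lemma sum_below_pos n f : sum_below n f <> 0 <-> exists i, i < n /\ f i <> 0.
Proof.
  induction n as [|n IH]; cbn [sum_below].
  - split; [lia|]. intros [i [Hi _]]. lia.
  - split.
    + intros H. destruct (Nat.eq_dec (f n) 0) as [E|E].
      * destruct (proj1 IH) as [i [Hi Hf]]; [lia|]. exists i. split; [lia|exact Hf].
      * exists n. split; [lia|exact E].
    + intros [i [Hi Hf]]. destruct (Nat.eq_dec i n) as [->|Ne]; [lia|].
      enough (sum_below n f <> 0) by lia.
      apply IH. exists i. split; [lia|exact Hf].
Qed.

Definition pex (b s : pexp) : pexp := Sum b s.

Lemma holds_pex b s env :
  holds (pex b s) env <-> exists i, i < den b env /\ holds s (i :: env).
Proof. apply sum_below_pos. Qed.

Definition pall (b s : pexp) : pexp := pnot (pex b (pnot s)).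

Lemma holds_pall b s env :
  holds (pall b s) env <-> forall i, i < den b env -> holds s (i :: env).
Proof.
  unfold pall. rewrite holds_pnot, holds_pex. split.
  - intros H i Hi. apply NNPP. intros Hs. apply H. exists i. rewrite holds_pnot. auto.
  - intros H [i [Hi Hs]]. rewrite holds_pnot in Hs. auto.
Qed.

(* Counts the [k <= x] with no solution [j <= k] of [s], i.e. finds the least solution. *)
Definition psearch (s : pexp) : pexp :=
  Sum (Succ (Var 0)) (pnot (pex (Succ (Var 0)) (Comp s [Var 0; Var 2]))).

Lemma sum_below_lt n i : sum_below n (fun k => if k <? i then 1 else 0) = Nat.min n i.
Proof.
  induction n as [|n IH]; cbn [sum_below]; [lia|].
  rewrite IH. destruct (Nat.ltb_spec n i); lia.
Qed.

Lemma den_psearch s x i :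
  i <= x -> holds s [i; x] -> (forall j, j < i -> ~ holds s [j; x]) ->
  den (psearch s) [x] = i.
Proof.
  intros Hix Hs Hmin. unfold psearch. cbn [den nth].
  transitivity (sum_below (S x) (fun k => if k <? i then 1 else 0));
    [|rewrite sum_below_lt; lia].
  induction (S x) as [|n IH]; cbn [sum_below]; [reflexivity|].
  rewrite IH. f_equal. rewrite den_pnot.
  set (inner := den (pex _ _) _).
  assert (Hinner : inner <> 0 <-> i <= n).
  { unfold inner. change (holds (pex (Succ (Var 0)) (Comp s [Var 0; Var 2])) [n; x] <-> i <= n).
    rewrite holds_pex. split.
    - intros [j [Hj Hsj]]. destruct (Nat.le_gt_cases i n) as [|Hlt]; [assumption|].
      exfalso. apply (Hmin j); [cbn in Hj; lia|exact Hsj].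
    - intros Hin. exists i. split; [cbn; lia|exact Hs]. }
  destruct (Nat.ltb_spec n i), (Nat.eqb_spec inner 0); lia.
Qed.

Fixpoint pswitch_from (k : nat) (a : pexp) (bs : list pexp) : pexp :=
  match bs with
  | [] => Zero
  | b :: bs' => por (pand (peq a (pnum k)) b) (pswitch_from (S k) a bs')
  end.

Definition pswitch (a : pexp) (bs : list pexp) : pexp := pswitch_from 0 a bs.

Lemma holds_pswitch_from k a bs env :
  holds (pswitch_from k a bs) env <->
  k <= den a env /\ holds (nth (den a env - k) bs Zero) env.
Proof.
  revert k; induction bs as [|b bs IH]; intros k; cbn [pswitch_from].
  - destruct (den a env - k); unfold holds; cbn; lia.
  - rewrite holds_por, holds_pand, holds_peq, den_pnum, IH.
    destruct (lt_eq_lt_dec (den a env) k) as [[Hlt| ->]|Hgt].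
    + split; [intros [[E _]|[E _]]|intros [E _]]; lia.
    + rewrite Nat.sub_diag. cbn [nth].
      split; [intros [[_ H]|[E _]]; [auto|lia]|intros [_ H]; auto].
    + replace (den a env - k) with (S (den a env - S k)) by lia. cbn [nth].
      split; [intros [[E _]|[_ H]]; [lia|split; [lia|exact H]]|].
      intros [_ H]. right. split; [lia|exact H].
Qed.

Lemma holds_pswitch a bs env :
  holds (pswitch a bs) env <-> holds (nth (den a env) bs Zero) env.
Proof.
  unfold pswitch. rewrite holds_pswitch_from, Nat.sub_0_r.
  split; [intros [_ H]; exact H|split; [lia|exact H]].
Qed.

(** * Pairs and lists *)

Definition pr (x y : nat) : nat := Cantor.to_nat (x, y).
Definition pr1 (p : nat) : nat := fst (Cantor.of_nat p).
Definition pr2 (p : nat) : nat := snd (Cantor.of_nat p).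

Lemma pr1_pr x y : pr1 (pr x y) = x.
Proof. unfold pr1, pr. rewrite cancel_of_to. reflexivity. Qed.

Lemma pr2_pr x y : pr2 (pr x y) = y.
Proof. unfold pr2, pr. rewrite cancel_of_to. reflexivity. Qed.

Lemma pr_pr1_pr2 p : pr (pr1 p) (pr2 p) = p.
Proof. unfold pr, pr1, pr2. rewrite <- surjective_pairing. apply cancel_to_of. Qed.

Lemma pr_inj x y x' y' : pr x y = pr x' y' -> x = x' /\ y = y'.
Proof. unfold pr. intros H. apply to_nat_inj in H. injection H. auto. Qed.

Lemma pr_ge x y : x <= pr x y /\ y <= pr x y.
Proof. pose proof (to_nat_non_decreasing x y). unfold pr. lia. Qed.

Definition ppair (a b : pexp) : pexp :=
  Comp (Add (Var 1) (Sum (Add (Var 1) (Var 0)) (Succ (Var 0)))) [a; b].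

Lemma den_ppair a b env : den (ppair a b) env = pr (den a env) (den b env).
Proof.
  unfold pr, to_nat. cbn. f_equal.
  induction (den b env + den a env) as [|n IH]; cbn; auto.
Qed.

Definition pfst (a : pexp) : pexp :=
  Comp (psearch (pex (Succ (Var 1)) (peq (ppair (Var 1) (Var 0)) (Var 2)))) [a].

Definition psnd (a : pexp) : pexp :=
  Comp (psearch (pex (Succ (Var 1)) (peq (ppair (Var 0) (Var 1)) (Var 2)))) [a].

Lemma den_pfst a env : den (pfst a) env = pr1 (den a env).
Proof.
  unfold pfst. cbn [den map]. rewrite <- (pr_pr1_pr2 (den a env)), pr1_pr.
  generalize (pr1 (den a env)) (pr2 (den a env)). intros x y.
  pose proof (pr_ge x y).
  apply den_psearch; [lia| |].
  - apply holds_pex. exists y. split; [cbn [den nth]; lia|].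
    apply holds_peq. rewrite den_ppair. reflexivity.
  - intros i Hi Hs. apply holds_pex in Hs. destruct Hs as [j [_ Hs]].
    apply holds_peq in Hs. rewrite den_ppair in Hs. cbn [den nth] in Hs.
    apply pr_inj in Hs. lia.
Qed.

Lemma den_psnd a env : den (psnd a) env = pr2 (den a env).
Proof.
  unfold psnd. cbn [den map]. rewrite <- (pr_pr1_pr2 (den a env)), pr2_pr.
  generalize (pr1 (den a env)) (pr2 (den a env)). intros x y.
  pose proof (pr_ge x y).
  apply den_psearch; [lia| |].
  - apply holds_pex. exists x. split; [cbn [den nth]; lia|].
    apply holds_peq. rewrite den_ppair. reflexivity.
  - intros i Hi Hs. apply holds_pex in Hs. destruct Hs as [j [_ Hs]].
    apply holds_peq in Hs. rewrite den_ppair in Hs. cbn [den nth] in Hs.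
    apply pr_inj in Hs. lia.
Qed.

Fixpoint enc_list (l : list nat) : nat :=
  match l with [] => 0 | x :: l' => S (pr x (enc_list l')) end.

Fixpoint dec_list_fuel (fuel w : nat) : list nat :=
  match fuel, w with
  | S fuel', S p => pr1 p :: dec_list_fuel fuel' (pr2 p)
  | _, _ => []
  end.

Definition dec_list (w : nat) : list nat := dec_list_fuel w w.

Lemma enc_dec_list_fuel fuel w : w <= fuel -> enc_list (dec_list_fuel fuel w) = w.
Proof.
  revert w; induction fuel as [|fuel IH]; intros [|p] Hw; cbn [dec_list_fuel enc_list]; try lia.
  pose proof (pr_ge (pr1 p) (pr2 p)) as Hge. rewrite pr_pr1_pr2 in Hge.
  rewrite IH, pr_pr1_pr2; [reflexivity|lia].
Qed.

Lemma enc_dec_list w : enc_list (dec_list w) = w.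
Proof. apply enc_dec_list_fuel. lia. Qed.

Lemma enc_list_inj l1 l2 : enc_list l1 = enc_list l2 -> l1 = l2.
Proof.
  revert l2; induction l1 as [|x l1 IH]; intros [|y l2] H; cbn in H; try lia.
  - reflexivity.
  - injection H as H. apply pr_inj in H as [-> H]. f_equal. auto.
Qed.

Lemma dec_enc_list l : dec_list (enc_list l) = l.
Proof. apply enc_list_inj, enc_dec_list. Qed.

Lemma dec_list_S p : dec_list (S p) = pr1 p :: dec_list (pr2 p).
Proof.
  apply enc_list_inj. cbn [enc_list]. rewrite !enc_dec_list, pr_pr1_pr2. reflexivity.
Qed.

Lemma enc_list_gt_In t l : In t l -> t < enc_list l.
Proof.
  induction l as [|x l IH]; [intros []|]. intros Ht. cbn [enc_list].
  pose proof (pr_ge x (enc_list l)).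
  destruct Ht as [->|Ht]; [lia|]. specialize (IH Ht). lia.
Qed.

Lemma length_le_enc_list l : length l <= enc_list l.
Proof.
  induction l as [|x l IH]; cbn; [lia|]. pose proof (pr_ge x (enc_list l)). lia.
Qed.

Definition phd (a : pexp) : pexp := pfst (ppred a).
Definition ptl (a : pexp) : pexp := psnd (ppred a).
Definition pcons (a b : pexp) : pexp := Succ (ppair a b).

Lemma den_phd a env : den (phd a) env = hd 0 (dec_list (den a env)).
Proof.
  unfold phd. rewrite den_pfst, den_ppred.
  destruct (den a env) as [|p]; [reflexivity|]. rewrite dec_list_S. reflexivity.
Qed.

Lemma den_ptl a env : den (ptl a) env = enc_list (tl (dec_list (den a env))).
Proof.
  unfold ptl. rewrite den_psnd, den_ppred.
  destruct (den a env) as [|p]; [reflexivity|]. rewrite dec_list_S. cbn.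
  symmetry. apply enc_dec_list.
Qed.

Lemma den_pcons a b env : den (pcons a b) env = S (pr (den a env) (den b env)).
Proof. cbn [pcons den]. rewrite den_ppair. reflexivity. Qed.

Definition pdrop (j a : pexp) : pexp := Comp (Fold (Var 0) (Var 1) (ptl (Var 1))) [j; a].

Lemma den_pdrop j a env :
  den (pdrop j a) env = enc_list (skipn (den j env) (dec_list (den a env))).
Proof.
  cbn [pdrop den map nth]. generalize (den j env) (den a env). intros m w.
  enough (forall n, iter_up n w (fun k acc => den (ptl (Var 1)) [k; acc; m; w])
                    = enc_list (skipn n (dec_list w))) by auto.
  induction n as [|n IH]; cbn [iter_up].
  - symmetry. apply enc_dec_list.
  - rewrite den_ptl. cbn [den nth]. rewrite IH, dec_enc_list.
    generalize (dec_list w). clear IH. induction n as [|n IH]; intros [|x l]; auto.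
    apply IH.
Qed.

Definition pnth (j a : pexp) : pexp := phd (pdrop j a).

Lemma den_pnth j a env : den (pnth j a) env = nth (den j env) (dec_list (den a env)) 0.
Proof.
  unfold pnth. rewrite den_phd, den_pdrop, dec_enc_list.
  generalize (dec_list (den a env)). induction (den j env) as [|n IH]; intros [|x l]; auto.
  apply IH.
Qed.

Definition plen (a : pexp) : pexp := Comp (psearch (pnot (pdrop (Var 0) (Var 1)))) [a].

Lemma den_plen a env : den (plen a) env = length (dec_list (den a env)).
Proof.
  unfold plen. cbn [den map]. rewrite <- (enc_dec_list (den a env)) at 1.
  generalize (dec_list (den a env)). intros l.
  apply den_psearch.
  - apply length_le_enc_list.
  - rewrite holds_pnot. unfold holds. rewrite den_pdrop. cbn [den nth].
    rewrite dec_enc_list, skipn_all. cbn. lia.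
  - intros j Hj. rewrite holds_pnot. unfold holds. rewrite den_pdrop.
    cbn [den nth]. rewrite dec_enc_list. destruct (skipn j l) eqn:E.
    + apply (f_equal (@length nat)) in E. rewrite length_skipn in E. cbn in E. lia.
    + cbn. lia.
Qed.

Definition pmem (a b : pexp) : pexp :=
  Comp (pex (plen (Var 0)) (peq (pnth (Var 0) (Var 1)) (Var 2))) [a; b].

Lemma holds_pmem a b env : holds (pmem a b) env <-> In (den b env) (dec_list (den a env)).
Proof.
  unfold pmem. rewrite holds_comp, holds_pex. cbn [map nth]. rewrite den_plen. cbn [den nth].
  split.
  - intros [i [Hi Hs]]. apply holds_peq in Hs. rewrite den_pnth in Hs. cbn [den nth] in Hs.
    rewrite <- Hs. apply nth_In. exact Hi.
  - intros Hin. apply (In_nth _ _ 0) in Hin as [i [Hi Hn]].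
    exists i. split; [exact Hi|]. apply holds_peq. rewrite den_pnth. exact Hn.
Qed.

(** * Certificates of computations *)

Fixpoint enc_code (c : code) : nat :=
  match c with
  | CZero => pr 0 0
  | CSucc => pr 1 0
  | CProj i => pr 2 i
  | CComp f gs => pr 3 (pr (enc_code f) (enc_list (map enc_code gs)))
  | CRec f g => pr 4 (pr (enc_code f) (enc_code g))
  | CMu f => pr 5 (enc_code f)
  end.

Definition triple (e X y : nat) : nat := pr e (pr X y).
Definition ptriple (a b c : pexp) : pexp := ppair a (ppair b c).

Lemma den_ptriple a b c env : den (ptriple a b c) env = triple (den a env) (den b env) (den c env).
Proof. unfold ptriple. rewrite !den_ppair. reflexivity. Qed.

Ltac simpl_den :=
  repeat first
    [ progress cbn [den map nth]
    | rewrite den_pnum | rewrite den_ppred | rewrite den_ppair | rewrite den_pfst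
    | rewrite den_psnd | rewrite den_phd | rewrite den_ptl | rewrite den_pcons
    | rewrite den_pnth | rewrite den_plen | rewrite den_ptriple | rewrite pr1_pr | rewrite pr2_pr
    | rewrite dec_enc_list ].

Ltac simpl_holds :=
  repeat first
    [ rewrite holds_pand | rewrite holds_por | rewrite holds_pnot | rewrite holds_peq
    | rewrite holds_pmem | rewrite holds_comp ];
  simpl_den.

Definition records (l : list nat) (c : code) (xs : list nat) (y : nat) : Prop :=
  In (triple (enc_code c) (enc_list xs) y) l.

Definition justified (l : list nat) (c : code) (xs : list nat) (y : nat) : Prop :=
  match c with
  | CZero => y = 0
  | CSucc => exists x xs', xs = x :: xs' /\ y = S x
  | CProj i => y = nth i xs 0
  | CComp f gs => exists ys, records l f ys y /\ length ys = length gs /\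
      forall k, k < length gs -> records l (nth k gs CZero) xs (nth k ys 0)
  | CRec f g => exists n xs', xs = n :: xs' /\
      match n with
      | 0 => records l f xs' y
      | S m => exists r, records l (CRec f g) (m :: xs') r /\ records l g (m :: r :: xs') y
      end
  | CMu f => records l f (y :: xs) 0 /\
      forall z, z < y -> exists v, records l f (z :: xs) (S v)
  end.

Lemma justified_incl l l' c xs y : incl l l' -> justified l c xs y -> justified l' c xs y.
Proof.
  intros Hl. destruct c; cbn [justified]; unfold records; auto.
  - intros [ys [Hf [Hlen Hgs]]]. exists ys. repeat split; auto.
  - intros [n [xs' [-> H]]]. exists n, xs'. split; [reflexivity|].
    destruct n as [|m]; auto. destruct H as [r [H1 H2]]. exists r. auto.
  - intros [H0 Hlt]. split; auto. intros z Hz. destruct (Hlt z Hz) as [v Hv]. exists v. auto.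
Qed.

(* The branches of the checker below run in the environment [[L; E; B; X; y]]: [L] is
   the certificate, [triple E X y] the claim to justify and [B] the arguments of [E]. *)
Definition check_zero : pexp := peq (Var 4) Zero.

Definition check_succ : pexp := pand (Var 3) (peq (Var 4) (Succ (phd (Var 3)))).

Definition check_proj : pexp := peq (Var 4) (pnth (Var 2) (Var 3)).

(* The intermediate values [ys], and [r] in [check_rec], are searched below [L]: they
   occur in members of the certificate. *)
Definition check_comp : pexp :=
  pex (Var 0)
    (pand (pmem (Var 1) (ptriple (pfst (Var 3)) (Var 0) (Var 5)))
    (pand (peq (plen (Var 0)) (plen (psnd (Var 3))))
          (pall (plen (Var 0))
             (pmem (Var 2) (ptriple (pnth (Var 0) (psnd (Var 4))) (Var 5) (pnth (Var 0) (Var 1))))))).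

Definition check_rec : pexp :=
  pand (Var 3)
    (por (pand (pnot (phd (Var 3))) (pmem (Var 0) (ptriple (pfst (Var 2)) (ptl (Var 3)) (Var 4))))
         (pand (phd (Var 3))
            (pex (Var 0)
               (pand (pmem (Var 1) (ptriple (Var 2) (pcons (ppred (phd (Var 4))) (ptl (Var 4))) (Var 0)))
                     (pmem (Var 1) (ptriple (psnd (Var 3))
                        (pcons (ppred (phd (Var 4))) (pcons (Var 0) (ptl (Var 4)))) (Var 5))))))).

Definition check_mu : pexp :=
  pand (pmem (Var 0) (ptriple (Var 2) (pcons (Var 4) (Var 3)) Zero))
       (pall (Var 4) (pex (Var 1) (pmem (Var 2) (ptriple (Var 4) (pcons (Var 1) (Var 5)) (Succ (Var 0)))))).

Definition pjustified : pexp :=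
  Comp (pswitch (pfst (Var 1)) [check_zero; check_succ; check_proj; check_comp; check_rec; check_mu])
       [Var 0; pfst (Var 1); psnd (pfst (Var 1)); pfst (psnd (Var 1)); psnd (psnd (Var 1))].

Lemma nth_map_enc_code k gs :
  k < length gs -> nth k (map enc_code gs) 0 = enc_code (nth k gs CZero).
Proof.
  intros Hk. rewrite (nth_indep _ 0 (enc_code CZero)) by (rewrite length_map; exact Hk).
  apply map_nth.
Qed.

Lemma triple_lt_enc_list e X y l :
  In (triple e X y) l -> X < enc_list l /\ y < enc_list l.
Proof.
  intros H. apply enc_list_gt_In in H. unfold triple in H.
  pose proof (pr_ge e (pr X y)). pose proof (pr_ge X y). lia.
Qed.

Lemma holds_check_zero L E B X y : holds check_zero [L; E; B; X; y] <-> y = 0.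
Proof. unfold check_zero. simpl_holds. reflexivity. Qed.

Lemma holds_check_succ L E B xs y :
  holds check_succ [L; E; B; enc_list xs; y] <-> exists x xs', xs = x :: xs' /\ y = S x.
Proof.
  unfold check_succ. simpl_holds. rewrite holds_var. cbn [nth].
  destruct xs as [|x xs']; cbn [hd enc_list].
  - split; [lia|]. intros [x [xs' [E' _]]]. discriminate.
  - split; [intros [_ ->]; eauto|]. intros [x0 [xs0 [E' ->]]]. injection E' as -> ->. lia.
Qed.

Lemma holds_check_proj L E i xs y :
  holds check_proj [L; E; i; enc_list xs; y] <-> y = nth i xs 0.
Proof. unfold check_proj. simpl_holds. reflexivity. Qed.

Lemma holds_check_comp l E f gs xs y :
  holds check_comp [enc_list l; E; pr (enc_code f) (enc_list (map enc_code gs)); enc_list xs; y] <->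
  justified l (CComp f gs) xs y.
Proof.
  unfold check_comp. rewrite holds_pex. cbn [justified]. unfold records. cbn [den nth].
  split.
  - intros [Ys [_ H]]. revert H. simpl_holds. rewrite holds_pall. simpl_den. rewrite length_map.
    intros [Hf [Hlen Hgs]]. exists (dec_list Ys). rewrite enc_dec_list.
    repeat split; [exact Hf|exact Hlen|]. intros k Hk.
    specialize (Hgs k ltac:(lia)). revert Hgs. simpl_holds.
    rewrite nth_map_enc_code by exact Hk. exact id.
  - intros [ys [Hf [Hlen Hgs]]]. exists (enc_list ys). split.
    + apply (triple_lt_enc_list _ _ _ _ Hf).
    + simpl_holds. rewrite holds_pall. simpl_den. rewrite length_map.
      repeat split; [exact Hf|exact Hlen|]. intros k Hk. simpl_holds.
      rewrite nth_map_enc_code by lia. apply Hgs. lia.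
Qed.

Lemma holds_check_rec l f g xs y :
  holds check_rec [enc_list l; enc_code (CRec f g); pr (enc_code f) (enc_code g); enc_list xs; y] <->
  justified l (CRec f g) xs y.
Proof.
  unfold check_rec. cbn [justified]. unfold records.
  rewrite holds_pand, holds_var, holds_por, !holds_pand, holds_pnot, holds_pmem, holds_pex.
  unfold holds at 1 2. simpl_den.
  destruct xs as [|n xs']; cbn [hd tl].
  - split; [intros [H _]; cbn in H; lia|intros [n [xs' [E _]]]; discriminate].
  - split.
    + intros [_ H]. exists n, xs'. split; [reflexivity|].
      destruct n as [|m]; destruct H as [[Hn Hf]|[Hn [r [_ Hr]]]]; try lia.
      * exact Hf.
      * revert Hr. simpl_holds. cbn [hd tl pred]. intros [H1 H2]. exists r. split; assumption.
    + intros [n0 [xs0 [E H]]]. injection E as <- <-. split; [cbn [enc_list]; lia|].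
      destruct n as [|m].
      * left. split; [lia|exact H].
      * right. split; [lia|]. destruct H as [r [H1 H2]]. exists r. split.
        -- apply (triple_lt_enc_list _ _ _ _ H1).
        -- simpl_holds. cbn [hd tl pred]. split; assumption.
Qed.

Lemma holds_check_mu l f xs y :
  holds check_mu [enc_list l; enc_code (CMu f); enc_code f; enc_list xs; y] <->
  justified l (CMu f) xs y.
Proof.
  unfold check_mu. cbn [justified]. unfold records.
  rewrite holds_pand, holds_pmem, holds_pall. simpl_den.
  apply and_iff_compat_l. split; intros H z Hz; specialize (H z Hz).
  - apply holds_pex in H as [v [_ Hv]]. revert Hv. simpl_holds. intros Hv.
    exists v. exact Hv.
  - destruct H as [v Hv]. apply holds_pex. exists v. split.
    + cbn [den nth]. apply triple_lt_enc_list in Hv. lia.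
    + simpl_holds. exact Hv.
Qed.

Lemma holds_pjustified l c xs y :
  holds pjustified [enc_list l; triple (enc_code c) (enc_list xs) y] <-> justified l c xs y.
Proof.
  unfold pjustified, triple. rewrite holds_comp. simpl_den. rewrite holds_pswitch. simpl_den.
  destruct c; cbn [enc_code]; simpl_den; cbn [nth justified].
  - apply holds_check_zero.
  - apply holds_check_succ.
  - apply holds_check_proj.
  - apply holds_check_comp.
  - apply holds_check_rec.
  - apply holds_check_mu.
Qed.

Section EvalInd.
Variable P : code -> list nat -> nat -> Prop.
Hypothesis Hzero : forall xs, P CZero xs 0.
Hypothesis Hsucc : forall x xs, P CSucc (x :: xs) (S x).
Hypothesis Hproj : forall i xs, P (CProj i) xs (nth i xs 0).
Hypothesis Hcomp : forall f gs xs ys y,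
  Forall2 (fun g y => P g xs y) gs ys -> P f ys y -> P (CComp f gs) xs y.
Hypothesis Hrec0 : forall f g xs y, P f xs y -> P (CRec f g) (0 :: xs) y.
Hypothesis HrecS : forall f g n xs r y,
  P (CRec f g) (n :: xs) r -> P g (n :: r :: xs) y -> P (CRec f g) (S n :: xs) y.
Hypothesis Hmu : forall f xs y,
  P f (y :: xs) 0 -> (forall z, z < y -> exists v, P f (z :: xs) (S v)) -> P (CMu f) xs y.

Fixpoint eval_ind' c xs y (H : eval c xs y) {struct H} : P c xs y :=
  match H in eval c xs y return P c xs y with
  | ev_zero xs => Hzero xs
  | ev_succ x xs => Hsucc x xs
  | ev_proj i xs => Hproj i xs
  | ev_comp f gs xs ys y HL Hf =>
      Hcomp f gs xs ys y
        ((fix all gs xs ys (HL : evalL gs xs ys) {struct HL}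
            : Forall2 (fun g y => P g xs y) gs ys :=
            match HL in evalL gs xs ys return Forall2 (fun g y => P g xs y) gs ys with
            | evL_nil xs => Forall2_nil _
            | evL_cons g gs xs y ys Hg Hgs => Forall2_cons _ _ (eval_ind' g xs y Hg) (all gs xs ys Hgs)
            end) gs xs ys HL)
        (eval_ind' f ys y Hf)
  | ev_rec0 f g xs y Hf => Hrec0 f g xs y (eval_ind' f xs y Hf)
  | ev_recS f g n xs r y Hr Hg => HrecS f g n xs r y (eval_ind' _ _ _ Hr) (eval_ind' _ _ _ Hg)
  | ev_mu f xs y H0 Hlt => Hmu f xs y (eval_ind' _ _ _ H0)
      (fun z Hz => match Hlt z Hz with ex_intro _ v Hv => ex_intro _ v (eval_ind' _ _ _ Hv) end)
  end.
End EvalInd.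

Lemma evalL_unique gs xs ys ys' :
  Forall2 (fun g y => forall y', eval g xs y' -> y = y') gs ys -> evalL gs xs ys' -> ys = ys'.
Proof.
  intros H. revert ys'. induction H as [|g y gs ys Hg _ IH]; intros ys' HL; inversion HL; subst.
  - reflexivity.
  - f_equal; auto.
Qed.

Lemma eval_deterministic c xs y y' : eval c xs y -> eval c xs y' -> y = y'.
Proof.
  intros H. revert y'.
  induction H as [xs|x xs|i xs|f gs xs ys y Hgs IHf|f g xs y IHf|f g n xs r y IHr IHg
                 |f xs y IH0 IHlt] using eval_ind';
    intros y' H'; inversion H'; subst; auto.
  - match goal with HL : evalL _ _ ?ys', Hf : eval f ?ys' _ |- _ =>
      rewrite <- (evalL_unique _ _ _ _ Hgs HL) in Hf; auto end.
  - match goal with Hr : eval (CRec _ _) _ ?r', Hg : eval g (_ :: ?r' :: _) _ |- _ =>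
      rewrite <- (IHr _ Hr) in Hg; auto end.
  - destruct (lt_eq_lt_dec y y') as [[Hlt| ]|Hgt]; auto; exfalso.
    + match goal with Hs : forall z, z < y' -> _ |- _ => destruct (Hs y Hlt) as [v Hv] end.
      specialize (IH0 _ Hv). discriminate.
    + destruct (IHlt y' Hgt) as [v Hv].
      match goal with H0 : eval f (y' :: xs) 0 |- _ => specialize (Hv _ H0) end. discriminate.
Qed.

Definition certificate (l : list nat) : Prop :=
  forall t, In t l -> exists c xs y, t = triple (enc_code c) (enc_list xs) y /\ justified l c xs y.

Definition derivable (c : code) (xs : list nat) (y : nat) : Prop :=
  exists l, certificate l /\ records l c xs y.

Lemma certificate_nil : certificate [].
Proof. intros t []. Qed.

Lemma certificate_app l1 l2 : certificate l1 -> certificate l2 -> certificate (l1 ++ l2).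
Proof.
  intros H1 H2 t Ht.
  destruct (in_app_or _ _ _ Ht) as [Ht'|Ht'];
    [destruct (H1 t Ht') as [c [xs [y [-> Hj]]]]|destruct (H2 t Ht') as [c [xs [y [-> Hj]]]]];
    exists c, xs, y; split; auto; eapply justified_incl; eauto; intros u Hu; apply in_or_app; auto.
Qed.

Lemma derivable_of_justified l c xs y : certificate l -> justified l c xs y -> derivable c xs y.
Proof.
  intros Hl Hj. exists (triple (enc_code c) (enc_list xs) y :: l). split; [|left; reflexivity].
  assert (Hincl : incl l (triple (enc_code c) (enc_list xs) y :: l)) by (intros u; right; auto).
  intros t [<-|Ht].
  - exists c, xs, y. split; [reflexivity|]. eapply justified_incl; eauto.
  - destruct (Hl t Ht) as [c' [xs' [y' [-> Hj']]]]. exists c', xs', y'.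
    split; [reflexivity|]. eapply justified_incl; eauto.
Qed.

Lemma derivable_list gs xs ys :
  Forall2 (fun g y => derivable g xs y) gs ys ->
  exists l, certificate l /\ length ys = length gs /\
    forall k, k < length gs -> records l (nth k gs CZero) xs (nth k ys 0).
Proof.
  unfold records. induction 1 as [|g y gs ys [l1 [C1 R1]] _ [l2 [C2 [Hlen R2]]]].
  - exists []. split; [exact certificate_nil|]. split; [reflexivity|]. cbn. lia.
  - exists (l1 ++ l2). split; [apply certificate_app; auto|]. split; [cbn; lia|].
    intros [|k] Hk; apply in_or_app; [left; exact R1|right; apply R2; cbn in Hk; lia].
Qed.

Lemma derivable_below f xs n :
  (forall z, z < n -> exists v, derivable f (z :: xs) (S v)) ->
  exists l, certificate l /\ forall z, z < n -> exists v, records l f (z :: xs) (S v).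
Proof.
  unfold records. induction n as [|n IH]; intros H.
  - exists []. split; [exact certificate_nil|]. lia.
  - destruct IH as [l1 [C1 R1]]; [intros z Hz; apply H; lia|].
    destruct (H n ltac:(lia)) as [v [l2 [C2 R2]]].
    exists (l1 ++ l2). split; [apply certificate_app; auto|].
    intros z Hz. destruct (Nat.eq_dec z n) as [->|Hne].
    + exists v. apply in_or_app. right. exact R2.
    + destruct (R1 z ltac:(lia)) as [v' Hv']. exists v'. apply in_or_app. left. exact Hv'.
Qed.

Theorem eval_derivable c xs y : eval c xs y -> derivable c xs y.
Proof.
  induction 1 as [xs|x xs|i xs|f gs xs ys y Hgs [l2 [C2 R2]]|f g xs y [l1 [C1 R1]]
                 |f g n xs r y [l1 [C1 R1]] [l2 [C2 R2]]|f xs y [l1 [C1 R1]] Hlt] using eval_ind'.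
  - apply (derivable_of_justified []); [exact certificate_nil|reflexivity].
  - apply (derivable_of_justified []); [exact certificate_nil|]. cbn. eauto.
  - apply (derivable_of_justified []); [exact certificate_nil|reflexivity].
  - destruct (derivable_list _ _ _ Hgs) as [l1 [C1 [Hlen R1]]].
    apply (derivable_of_justified (l1 ++ l2)); [apply certificate_app; auto|].
    exists ys. unfold records in *. split; [apply in_or_app; auto|].
    split; [exact Hlen|]. intros k Hk. apply in_or_app. auto.
  - apply (derivable_of_justified l1); [exact C1|]. exists 0, xs. auto.
  - apply (derivable_of_justified (l1 ++ l2)); [apply certificate_app; auto|].
    exists (S n), xs. split; [reflexivity|]. exists r. unfold records in *.
    split; apply in_or_app; auto.
  - destruct (derivable_below _ _ _ Hlt) as [l2 [C2 R2]].
    apply (derivable_of_justified (l1 ++ l2)); [apply certificate_app; auto|].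
    unfold records in *. split; [apply in_or_app; auto|].
    intros z Hz. destruct (R2 z Hz) as [v Hv]. exists v. apply in_or_app. auto.
Qed.

Definition checked (l : list nat) : Prop :=
  forall t, In t l -> holds pjustified [enc_list l; t].

Lemma checked_certificate l : certificate l -> checked l.
Proof.
  intros C t Ht. destruct (C t Ht) as [c [xs [y [-> Hj]]]]. apply holds_pjustified. exact Hj.
Qed.

Lemma evalL_nth gs xs ys :
  length ys = length gs ->
  (forall k, k < length gs -> eval (nth k gs CZero) xs (nth k ys 0)) -> evalL gs xs ys.
Proof.
  revert ys; induction gs as [|g gs IH]; intros [|y ys] Hlen H; cbn in Hlen; try lia;
    constructor.
  - apply (H 0). cbn. lia.
  - apply IH; [lia|]. intros k Hk. apply (H (S k)). cbn. lia.
Qed.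

Lemma lt_pr_tag k x : 0 < k -> x < pr k x.
Proof. intros Hk. pose proof (to_nat_non_decreasing k x). unfold pr. lia. Qed.

Theorem checked_sound l c xs y : checked l -> records l c xs y -> eval c xs y.
Proof.
  intros Hl. revert xs y.
  induction c as [c IH] using (induction_ltof1 _ enc_code). unfold ltof in IH.
  intros xs y Hc. apply Hl, holds_pjustified in Hc.
  destruct c as [| |i|f gs|f g|f]; cbn [justified] in Hc.
  - subst. constructor.
  - destruct Hc as [x [xs' [-> ->]]]. constructor.
  - subst. constructor.
  - destruct Hc as [ys [Hf [Hlen Hgs]]].
    pose proof (lt_pr_tag 3 (pr (enc_code f) (enc_list (map enc_code gs))) ltac:(lia)).
    pose proof (pr_ge (enc_code f) (enc_list (map enc_code gs))).
    apply ev_comp with ys.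
    + apply evalL_nth; [exact Hlen|]. intros k Hk. apply IH; [|apply Hgs, Hk].
      assert (Hin : In (enc_code (nth k gs CZero)) (map enc_code gs))
        by (apply in_map, nth_In, Hk).
      apply enc_list_gt_In in Hin. cbn [enc_code]. lia.
    + apply IH; [cbn [enc_code]; lia|exact Hf].
  - pose proof (lt_pr_tag 4 (pr (enc_code f) (enc_code g)) ltac:(lia)).
    pose proof (pr_ge (enc_code f) (enc_code g)).
    destruct Hc as [n [xs' [-> Hn]]]. revert y Hn.
    (* The premise about [CRec f g] itself is handled by induction on the counter. *)
    induction n as [|m IHm]; intros y Hn.
    + constructor. apply IH; [cbn [enc_code]; lia|exact Hn].
    + destruct Hn as [r [Hr Hg]]. apply ev_recS with r.
      * apply Hl, holds_pjustified in Hr. destruct Hr as [n [xs'' [E Hr]]].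
        injection E as <- <-. apply IHm, Hr.
      * apply IH; [cbn [enc_code]; lia|exact Hg].
  - pose proof (lt_pr_tag 5 (enc_code f) ltac:(lia)).
    destruct Hc as [H0 Hlt]. constructor.
    + apply IH; [cbn [enc_code]; lia|exact H0].
    + intros z Hz. destruct (Hlt z Hz) as [v Hv]. exists v.
      apply IH; [cbn [enc_code]; lia|exact Hv].
Qed.

(** * The diagonal set *)

Definition ppow2 (a : pexp) : pexp := Comp (Fold (Var 0) (Succ Zero) (Add (Var 1) (Var 1))) [a].

Lemma den_ppow2 a env : den (ppow2 a) env = 2 ^ den a env.
Proof.
  cbn [ppow2 den map nth]. induction (den a env) as [|n IH]; cbn [iter_up den nth]; [reflexivity|].
  rewrite IH. cbn. lia.
Qed.

(* The input on which the code numbered [e] is diagonalised against. *)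
Definition query (e : nat) : list nat := [2 ^ S e; 2 ^ e].

Definition witness (e w : nat) : Prop :=
  checked (dec_list w) /\ In (triple e (enc_list (query e)) 0) (dec_list w).

Definition least_witness (e w : nat) : Prop :=
  witness e w /\ forall w', w' < w -> ~ witness e w'.

Lemma witness_iff_eval c : (exists w, witness (enc_code c) w) <-> eval c (query (enc_code c)) 0.
Proof.
  split.
  - intros [w [Hw Hin]]. exact (checked_sound _ _ _ _ Hw Hin).
  - intros H. destruct (eval_derivable _ _ _ H) as [l [Hl Hin]].
    exists (enc_list l). unfold witness. rewrite dec_enc_list.
    split; [apply checked_certificate, Hl|exact Hin].
Qed.

Lemma least_witness_exists e w : witness e w -> exists w0, least_witness e w0.
Proof.
  intros Hw.
  destruct (dec_inh_nat_subset_has_unique_least_element (witness e) (fun n => classic _)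
              (ex_intro _ w Hw)) as [w0 [[Hw0 Hmin] _]].
  exists w0. split; [exact Hw0|]. intros w' Hlt Hw'. specialize (Hmin w' Hw'). lia.
Qed.

Lemma least_witness_unique e w w' : least_witness e w -> least_witness e w' -> w = w'.
Proof.
  intros [H1 M1] [H2 M2]. destruct (lt_eq_lt_dec w w') as [[Hlt| ]|Hgt]; auto.
  - exfalso. exact (M2 w Hlt H1).
  - exfalso. exact (M1 w' Hgt H2).
Qed.

Definition pvalid : pexp := pall (plen (Var 0)) (Comp pjustified [Var 1; pnth (Var 0) (Var 1)]).

Lemma holds_pvalid w : holds pvalid [w] <-> checked (dec_list w).
Proof.
  unfold pvalid, checked. rewrite holds_pall. simpl_den. rewrite enc_dec_list. split.
  - intros H t Ht. apply (In_nth _ _ 0) in Ht as [j [Hj <-]].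
    specialize (H j Hj). revert H. simpl_holds. exact id.
  - intros H j Hj. simpl_holds. apply H, nth_In, Hj.
Qed.

Definition pwitness : pexp :=
  pand (Comp pvalid [Var 1])
       (pmem (Var 1) (ptriple (Var 0) (pcons (ppow2 (Succ (Var 0))) (pcons (ppow2 (Var 0)) Zero)) Zero)).

Lemma holds_pwitness e w : holds pwitness [e; w] <-> witness e w.
Proof.
  unfold pwitness, witness. simpl_holds. rewrite holds_pvalid. rewrite !den_ppow2. reflexivity.
Qed.

Definition pleast_witness : pexp :=
  pand pwitness (pall (Var 1) (pnot (Comp pwitness [Var 1; Var 0]))).

Lemma holds_pleast_witness e w : holds pleast_witness [e; w] <-> least_witness e w.
Proof.
  unfold pleast_witness, least_witness. rewrite holds_pand, holds_pwitness, holds_pall.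
  cbn [den nth]. apply and_iff_compat_l.
  split; intros H w' Hw'; specialize (H w' Hw'); revert H;
    rewrite holds_pnot, holds_comp; cbn [map den nth]; rewrite holds_pwitness; exact id.
Qed.

Definition diagonal_nat (h : nat) : Prop :=
  h = 0 \/ exists e w, h = 2 ^ e * (2 * w + 1) /\ least_witness e w.

Definition diagonal_set (z : Z) : Prop := exists h, z = Z.of_nat h /\ diagonal_nat h.

Definition pdiagonal_nat : pexp :=
  por (pnot (Var 0))
      (pex (Succ (Var 0)) (pex (Succ (Var 1))
         (pand (peq (Var 2) (pmul (ppow2 (Var 1)) (Succ (Add (Var 0) (Var 0)))))
               (Comp pleast_witness [Var 1; Var 0])))).

Lemma pow2_pos e : 0 < 2 ^ e.
Proof. apply Nat.neq_0_lt_0, Nat.pow_nonzero. lia. Qed.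

Lemma holds_pdiagonal_nat h : holds pdiagonal_nat [h] <-> diagonal_nat h.
Proof.
  unfold pdiagonal_nat, diagonal_nat. rewrite holds_por, holds_pnot, holds_var. cbn [nth].
  assert (Hbody : forall e w, holds (pand (peq (Var 2) (pmul (ppow2 (Var 1)) (Succ (Add (Var 0) (Var 0)))))
                                   (Comp pleast_witness [Var 1; Var 0])) [w; e; h]
                       <-> h = 2 ^ e * (2 * w + 1) /\ least_witness e w).
  { intros e w. rewrite holds_pand, holds_peq, holds_comp, den_pmul, den_ppow2.
    cbn [den map nth]. rewrite holds_pleast_witness. split; intros [E Hl]; split; auto; lia. }
  split.
  - intros [H|H]; [left; lia|right].
    apply holds_pex in H as [e [_ H]]. apply holds_pex in H as [w [_ H]].
    apply Hbody in H. eauto.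
  - intros [H|[e [w [Eh H]]]]; [left; lia|right].
    pose proof (pow2_pos e). pose proof (Nat.pow_gt_lin_r 2 e ltac:(lia)).
    apply holds_pex. exists e. split; [cbn [den nth]; nia|].
    apply holds_pex. exists w. split; [cbn [den nth]; nia|].
    apply Hbody. auto.
Qed.

Definition pdiagonal_set : pexp :=
  pex (Succ (Var 0)) (pand (peq (Var 1) (Add (Var 0) (Var 0))) (Comp pdiagonal_nat [Var 0])).

Lemma holds_pdiagonal_set z : holds pdiagonal_set [Z_to_nat z] <-> diagonal_set z.
Proof.
  unfold pdiagonal_set, diagonal_set. rewrite holds_pex. cbn [den nth].
  setoid_rewrite holds_pand. setoid_rewrite holds_peq. setoid_rewrite holds_comp.
  cbn [den map nth]. setoid_rewrite holds_pdiagonal_nat.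
  unfold Z_to_nat. destruct (Z.leb_spec 0 z) as [Hz|Hz]; split.
  - intros [h [_ [E H]]]. exists h. split; [lia|exact H].
  - intros [h [-> H]]. exists h. split; [lia|split; [lia|exact H]].
  - intros [h [_ [E _]]]. lia.
  - intros [h [-> _]]. lia.
Qed.

Lemma diagonal_set_recursive : recursive_Zset diagonal_set.
Proof.
  exists (compile 1 (pbool pdiagonal_set)). intros z.
  pose proof (compile_correct (pbool pdiagonal_set) [Z_to_nat z]) as H. cbn [length] in H.
  rewrite den_pbool in H. rewrite <- holds_pdiagonal_set. unfold holds.
  destruct (Nat.eqb_spec (den pdiagonal_set [Z_to_nat z]) 0); split; intros; auto; contradiction.
Qed.

Lemma profinite_closed_of_divisible_tail (A : Z -> Prop) :
  A 0%Z ->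
  (forall m, exists n B, (m < n)%Z /\ forall x, A x -> (Z.abs x < B)%Z \/ (n | x)%Z) ->
  profinite_closed A.
Proof.
  intros H0 Htail y Hy.
  assert (Hy0 : y <> 0%Z) by (intros ->; exact (Hy H0)).
  destruct (Htail (Z.abs y)) as [n [B [Hn HB]]].
  assert (Hpos : (0 < Z.abs y)%Z) by lia. pose proof (Z.abs_nonneg B).
  set (c := (Z.abs B + Z.abs y + 1)%Z).
  assert (Hc : (c <= n * c)%Z) by (unfold c; nia).
  exists y, (n * c)%Z. split; [lia|split; [exists 0%Z; ring|]].
  intros x [k ->] Hx.
  destruct (Z.eq_dec k 0) as [->|Hk]; [apply Hy; rewrite Z.mul_0_r, Z.add_0_r in Hx; exact Hx|].
  assert (Hk' : (n * c <= Z.abs (n * c * k))%Z) by (rewrite Z.abs_mul; nia).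
  destruct (HB _ Hx) as [Hsmall|[q Hq]]; [unfold c in *; lia|].
  (* [n] divides [y] although [0 < |y| < n]. *)
  assert (Hyq : y = (n * (q - c * k))%Z) by lia.
  assert (q - c * k <> 0)%Z by (intros E; rewrite E in Hyq; lia).
  nia.
Qed.

Lemma bounded_of_functional (R : nat -> nat -> Prop) (f : nat -> nat -> nat) :
  (forall e w w', R e w -> R e w' -> w = w') ->
  forall T, exists B, forall e w, e < T -> R e w -> f e w < B.
Proof.
  intros Hfun T. induction T as [|T [B HB]]; [exists 0; lia|].
  destruct (classic (exists w, R T w)) as [[w0 Hw0]|Hnone].
  - exists (B + f T w0 + 1). intros e w He Hw.
    destruct (Nat.eq_dec e T) as [->|Hne].
    + rewrite (Hfun _ _ _ Hw Hw0). lia.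
    + specialize (HB e w ltac:(lia) Hw). lia.
  - exists B. intros e w He Hw. destruct (Nat.eq_dec e T) as [->|Hne].
    + exfalso. eauto.
    + apply (HB e w); [lia|exact Hw].
Qed.

Lemma diagonal_nat_divisible_tail T : exists B, forall h, diagonal_nat h -> h < B \/ Nat.divide (2 ^ T) h.
Proof.
  destruct (bounded_of_functional least_witness (fun e w => 2 ^ e * (2 * w + 1))
              least_witness_unique T) as [B HB].
  exists B. intros h [->|[e [w [-> Hw]]]]; [right; apply Nat.divide_0_r|].
  destruct (Nat.lt_ge_cases e T) as [He|He]; [left; apply (HB e w He Hw)|right].
  exists (2 ^ (e - T) * (2 * w + 1)).
  rewrite <- Nat.mul_assoc, (Nat.mul_comm (2 * w + 1)), Nat.mul_assoc, <- Nat.pow_add_r.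
  f_equal. f_equal. lia.
Qed.

Lemma diagonal_set_closed : profinite_closed diagonal_set.
Proof.
  apply profinite_closed_of_divisible_tail; [exists 0; split; [reflexivity|left; reflexivity]|].
  intros m. set (T := Z.to_nat m). destruct (diagonal_nat_divisible_tail T) as [B HB].
  exists (Z.of_nat (2 ^ T)), (Z.of_nat B). split.
  - pose proof (Nat.pow_gt_lin_r 2 T ltac:(lia)). unfold T in *. lia.
  - intros x [h [-> Hh]]. destruct (HB h Hh) as [Hlt|Hdiv]; [left; lia|right].
    destruct Hdiv as [q ->]. exists (Z.of_nat q). apply Nat2Z.inj_mul.
Qed.

Lemma pow2_odd_inj a u b v : 2 ^ a * (2 * u + 1) = 2 ^ b * (2 * v + 1) -> a = b /\ u = v.
Proof.
  revert b; induction a as [|a IH]; intros [|b] E; cbn [Nat.pow] in E.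
  - lia.
  - pose proof (pow2_pos b). nia.
  - pose proof (pow2_pos a). nia.
  - destruct (IH b) as [-> ->]; [lia|auto].
Qed.

Lemma mod_pow2_S x e : x mod 2 ^ S e = 2 ^ e <-> exists q, x = 2 ^ e * (2 * q + 1).
Proof.
  pose proof (pow2_pos e). change (2 ^ S e) with (2 * 2 ^ e). split.
  - intros Hx. exists (x / (2 * 2 ^ e)).
    pose proof (Nat.div_mod x (2 * 2 ^ e) ltac:(lia)). nia.
  - intros [q ->]. symmetry. apply (Nat.mod_unique _ _ q); nia.
Qed.

(* The elements of [diagonal_set] congruent to [2 ^ e] modulo [2 ^ (e + 1)] are those
   of 2-adic valuation [e]. *)
Lemma mod_set_query e : mod_set diagonal_set (2 ^ S e) (2 ^ e) <-> exists w, witness e w.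
Proof.
  pose proof (pow2_pos e). unfold mod_set. split.
  - intros [_ [x [[h [-> Hh]] Hmod]]].
    rewrite <- Nat2Z.inj_mod in Hmod. apply Nat2Z.inj, mod_pow2_S in Hmod as [q Hq].
    destruct Hh as [->|[e' [w [Eh [Hw _]]]]]; [nia|].
    rewrite Hq in Eh. apply pow2_odd_inj in Eh as [<- _]. eauto.
  - intros [w Hw]. destruct (least_witness_exists _ _ Hw) as [w0 Hw0].
    split; [cbn [Nat.pow]; lia|].
    exists (Z.of_nat (2 ^ e * (2 * w0 + 1))). split.
    + eexists. split; [reflexivity|right; eauto].
    + rewrite <- Nat2Z.inj_mod. f_equal. apply mod_pow2_S. eauto.
Qed.

(* Run a code [c] on its own query: it cannot output the value of [P] there. *)
Lemma diagonal_not_decidable (P : nat -> nat -> Prop) :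
  (forall c, P (2 ^ S (enc_code c)) (2 ^ enc_code c) <-> eval c (query (enc_code c)) 0) ->
  ~ exists c, forall n r, 1 <= n ->
      (P n r -> eval c [n; r] 1) /\ (~ P n r -> eval c [n; r] 0).
Proof.
  intros Hdiag [c Hc]. set (e := enc_code c).
  destruct (Hc (2 ^ S e) (2 ^ e)) as [H1 H0]; [pose proof (pow2_pos (S e)); lia|].
  specialize (Hdiag c). fold e in Hdiag. unfold query in Hdiag.
  destruct (classic (P (2 ^ S e) (2 ^ e))) as [HP|HP].
  - pose proof (eval_deterministic _ _ _ _ (H1 HP) (proj1 Hdiag HP)). discriminate.
  - exact (HP (proj2 Hdiag (H0 HP))).
Qed.

Theorem mainTheorem19 :
  exists A : Z -> Prop,
    recursive_Zset A /\ profinite_closed A /\ ~ recursive_mod_map A.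
Proof.
  exists diagonal_set.
  split; [exact diagonal_set_recursive|].
  split; [exact diagonal_set_closed|].
  apply diagonal_not_decidable. intros c.
  rewrite mod_set_query. apply witness_iff_eval.
Qed.
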